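(* Let $(G,w)$ be a weighted trigraph and let $(A,B,C)$ be a cut-partition of $G$. For each $X\in\{A,B\}$, let $G_X$ be a trigraph obtained from $G[X\cup C]$ by turning some (possibly none) of the strongly anti-adjacent pairs of $G[X\cup C]$ into semi-adjacent pairs (so that $w$ restricted to $D(G_X)$ is a weight function for $G_X$). For every $C'\subseteq C$ set $\alpha_{A\cup C'}=\alpha(\mathrm{Red}[G_A,w;A\cup C'])+\mathrm{Ext}[G_A,w;A\cup C']$. Let $k\in\mathbb N$ and let $w_B$ be a weight function for $G_B$ such that: $w_B(u)=w(u)$ for all $u\in B$; $w_B(u,v)=w(u,v)$, $w_B(v,u)=w(v,u)$ and $w_B(uv)=w(uv)$ for all $uv\in\binom{B\cup C}{2}\setminus\binom{C}{2}$; and $\llbracket S_C\rrbracket_{(G_B[C],w_B)}=\alpha_{A\cup S_C}-k$ for every $S_C\subseteq C$ that is a stable set of $G_B$. Then $\alpha(G,w)=k+\alpha(G_B,w_B)$.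
   Context: A trigraph $G$ consists of a finite vertex set $V(G)$ and an adjacency function $\theta_G:\binom{V(G)}{2}\to\{-1,0,1\}$; for distinct $u,v$ write $uv$ for $\{u,v\}$. The pair $uv$ is strongly adjacent if $\theta_G(uv)=1$, semi-adjacent if $\theta_G(uv)=0$, strongly anti-adjacent if $\theta_G(uv)=-1$; $u,v$ are anti-adjacent if $\theta_G(uv)\le 0$. A stable set is a set of pairwise anti-adjacent vertices. For $X\subseteq V(G)$, $G[X]$ is the trigraph on $X$ with the restricted adjacency function. $\mathbb N$ denotes the non-negative integers. For a trigraph $G$ let $D(G)=V(G)\cup\{(u,v):u,v\in V(G),u\neq v\}\cup\binom{V(G)}{2}$. A weight function for $G$ is a map $w:D(G)\to\mathbb N$ such that for all distinct $u,v$: if $uv$ is not semi-adjacent then $w(u,v)=w(v,u)=w(uv)=0$, and $w(u,v)\le w(uv)$. A weighted trigraph is a pair $(G,w)$ with $w$ a weight function for $G$; for $X\subseteq V(G)$, $(G[X],w)$ denotes $(G[X],w|_{D(G[X])})$. The weight of $S\subseteq V(G)$ is $\llbracket S\rrbracket_{(G,w)}=\sum_{u\in S}w(u)+\sum_{u\in S}\sum_{v\in V(G)\setminus S}w(u,v)+\sum_{uv\in\binom{V(G)\setminus S}{2}}w(uv)$, and $\alpha(G,w)=\max\{\llbracket S\rrbracket_{(G,w)}: S \text{ a stable set of } G\}$. For $R\subseteq V(G)$, the reduction $\mathrm{Red}[G,w;R]$ is the weighted trigraph $(G[R],w')$ where $w'(u)=\max\{w(u)-\sum_{v\in V(G)\setminus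 R}(w(uv)-w(u,v)),0\}$ for $u\in R$, and $w'(u,v)=w(u,v)$, $w'(uv)=w(uv)$ for distinct $u,v\in R$. The exterior weight is $\mathrm{Ext}[G,w;R]=\sum_{uv\in\binom{V(G)\setminus R}{2}}w(uv)+\sum_{u\in R}\sum_{v\in V(G)\setminus R}w(uv)$. A cut-partition of $G$ is a partition $(A,B,C)$ of $V(G)$ with $A,B$ non-empty ($C$ possibly empty) such that every vertex of $A$ is strongly anti-adjacent to every vertex of $B$. *)

From HB Require Import structures.
From mathcomp Require Import all_boot all_order all_algebra.
Set Implicit Arguments. Unset Strict Implicit. Unset Printing Implicit Defensive.
Import GRing.Theory Num.Theory.

(* Vertices live in an ambient finite type T; a trigraph has a finite vertex
   set V(G) : {set T} and an adjacency function on unordered pairs, where an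
   unordered pair {u,v} is the 2-element set [set u; v]. Only the values of
   tadj on 2-subsets of V(G) are meaningful. *)
Record trigraph (T : finType) := Trigraph {
  tverts : {set T};
  tadj : {set T} -> int }.

(* A weight map: values on vertices, on ordered pairs (u,v), and on unordered
   pairs {u,v}.  Only values on D(G) are meaningful. *)
Record weight (T : finType) := Weight {
  wv : T -> nat;
  wo : T -> T -> nat;
  wu : {set T} -> nat }.

Definition pairs2 (T : finType) (X : {set T}) : {set {set T}} :=
  [set e : {set T} | (e \subset X) && (#|e| == 2)].

Definition is_trigraph (T : finType) (G : trigraph T) : Prop :=
  forall e, e \in pairs2 (tverts G) ->
    tadj G e \in [:: (-1)%R; 0%R; 1%R].

Definition is_weight_function (T : finType) (G : trigraph T) (w : weight T) : Prop :=
  forall u v, u \in tverts G -> v \in tverts G -> u != v ->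
    (tadj G [set u; v] != 0%R ->
       [/\ wo w u v = 0, wo w v u = 0 & wu w [set u; v] = 0])
    /\ wo w u v <= wu w [set u; v].

(* G[X] : restriction of the adjacency function is implicit *)
Definition induced (T : finType) (G : trigraph T) (X : {set T}) : trigraph T :=
  Trigraph X (tadj G).

Definition stable (T : finType) (G : trigraph T) (S : {set T}) : bool :=
  (S \subset tverts G) &&
  [forall u in S, forall v in S, (u != v) ==> (tadj G [set u; v] <= 0)%R].

Definition wt (T : finType) (G : trigraph T) (w : weight T) (S : {set T}) : nat :=
  \sum_(u in S) wv w u
  + \sum_(u in S) \sum_(v in tverts G :\: S) wo w u v
  + \sum_(e in pairs2 (tverts G :\: S)) wu w e.

Definition alpha (T : finType) (G : trigraph T) (w : weight T) : nat :=
  \max_(S : {set T} | stable G S) wt G w S.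

(* Red[G,w;R] = (red_graph G R, red_weight G w R).  The outer max(.,0) is
   truncated subtraction on nat; the inner differences w(uv)-w(u,v) are
   non-negative for a weight function. *)
Definition red_graph (T : finType) (G : trigraph T) (R : {set T}) : trigraph T :=
  induced G R.

Definition red_weight (T : finType) (G : trigraph T) (w : weight T) (R : {set T})
  : weight T :=
  Weight (fun u => wv w u - \sum_(v in tverts G :\: R) (wu w [set u; v] - wo w u v))
         (wo w) (wu w).

Definition ext (T : finType) (G : trigraph T) (w : weight T) (R : {set T}) : nat :=
  \sum_(e in pairs2 (tverts G :\: R)) wu w e
  + \sum_(u in R) \sum_(v in tverts G :\: R) wu w [set u; v].

Definition cut_partition (T : finType) (G : trigraph T) (A B C : {set T}) : Prop :=
  [/\ A :|: B :|: C = tverts G,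
      [disjoint A & B], [disjoint A & C] & [disjoint B & C]]
  /\ [/\ A != set0, B != set0 &
      forall a b, a \in A -> b \in B -> tadj G [set a; b] = (-1)%R].

Definition relaxation (T : finType) (G : trigraph T) (X : {set T}) (H : trigraph T)
  : Prop :=
  tverts H = X /\
  forall e, e \in pairs2 X ->
    tadj H e = tadj G e \/ (tadj G e = (-1)%R /\ tadj H e = 0%R).

Definition alphaAC (T : finType) (GA : trigraph T) (w : weight T) (A C' : {set T}) : nat :=
  alpha (red_graph GA (A :|: C')) (red_weight GA w (A :|: C')) + ext GA w (A :|: C').

From mathcomp Require Import all_boot all_order all_algebra.
From mathcomp Require Import zify.
Set Implicit Arguments. Unset Strict Implicit. Unset Printing Implicit Defensive.

(* Since A and B are strongly anti-adjacent, no pair between them carries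
   weight, and wB agrees with w on every pair meeting B.  Hence for S ⊆ V(G)
     [[S]]_(G,w) + [[S ∩ C]]_(G_B[C],wB)
       = [[S ∩ (A ∪ C)]]_(G[A ∪ C],w) + [[S ∩ (B ∪ C)]]_(G_B,wB).
   For S stable, the first term on the right is at most α_{A ∪ (S ∩ C)}, which
   by hypothesis is [[S ∩ C]] + k; this gives α(G,w) ≤ k + α(G_B,wB).
   Conversely, take an optimal stable set S' of G_B and an optimal stable set of
   Red[G_A,w; A ∪ (S' ∩ C)].  Discarding from the latter the vertices whose
   reduced weight was truncated to 0 leaves a set T' of weight at least
   α_{A ∪ (S' ∩ C)} in G[A ∪ C], and T' ∪ (S' ∩ B) is stable in G.  Its trace
   on C may be smaller than S' ∩ C, but growing the trace on C raises the
   weight on B ∪ C by at most the raise on C, because w(v,u) ≤ w(uv). *)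

Section SetSums.
Variable T : finType.
Implicit Types (X Y : {set T}) (f : {set T} -> nat).

Lemma disjointP X Y : reflect (forall x, x \in X -> x \notin Y) [disjoint X & Y].
Proof.
rewrite disjoint_subset; apply: (iffP subsetP) => h x /h; by rewrite inE.
Qed.

Lemma sum_setU (F : T -> nat) X Y : [disjoint X & Y] ->
  \sum_(u in X :|: Y) F u = \sum_(u in X) F u + \sum_(u in Y) F u.
Proof. by move=> dXY; rewrite -bigU //; apply: eq_bigl => x; rewrite !inE. Qed.

Lemma pairs2P X e : e \in pairs2 X ->
  exists u v, [/\ u \in X, v \in X, u != v & e = [set u; v]].
Proof.
rewrite inE => /andP [sub /cards2P [u [v [uv E]]]].
by exists u, v; split => //; apply: (subsetP sub); rewrite E !inE eqxx ?orbT.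
Qed.

Lemma mem_pairs2 X u v : u \in X -> v \in X -> u != v -> [set u; v] \in pairs2 X.
Proof.
move=> uX vX uv; rewrite inE cards2 uv andbT; apply/subsetP => x.
by rewrite !inE => /orP [] /eqP ->.
Qed.

Lemma pairs2_set1 (u : T) : pairs2 [set u] = set0.
Proof.
apply/setP => e; rewrite !inE; apply/negbTE/andP => [[sub /eqP c2]].
by have := subset_leq_card sub; rewrite c2 cards1.
Qed.

Lemma sum_pairs2_double f X :
  2 * \sum_(e in pairs2 X) f e = \sum_(u in X) \sum_(v in X :\ u) f [set u; v].
Proof.
rewrite (pair_big_dep (mem X) (fun u v => v \in X :\ u) (fun u v => f [set u; v])) /=.
rewrite (partition_big (fun p : T * T => [set p.1; p.2]) (mem (pairs2 X))) /=;
  last first.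
  move=> [u v] /= /andP [uX]; rewrite in_setD1 => /andP [vu vX].
  by apply: mem_pairs2; rewrite // eq_sym.
rewrite big_distrr /=; apply: eq_bigr => e eX.
rewrite (eq_bigr (fun _ => f e)); last by move=> p /andP [_ /eqP ->].
rewrite sum_nat_cond_const; congr (_ * _).
have [a [b [aX bX ab ->]]] := pairs2P eX.
have nab : (a, b) != (b, a) by apply: contra ab => /eqP [->].
symmetry; transitivity #|[set (a, b); (b, a)]|; last by rewrite cards2 nab.
apply: eq_card => -[x y]; rewrite !inE /=.
apply/idP/idP.
- case/andP => /and3P [xX yx yX] /eqP Exy.
  have : x \in [set a; b] by rewrite -Exy !inE eqxx.
  have : y \in [set a; b] by rewrite -Exy !inE eqxx orbT.
  rewrite !inE !xpair_eqE => /orP [] /eqP ? /orP [] /eqP ?; subst x y;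
    rewrite ?eqxx ?orbT //; by rewrite eqxx in yx.
- rewrite !xpair_eqE => /orP [] /andP [/eqP -> /eqP ->];
    rewrite aX bX ?(eq_sym b a) ab /= ?eqxx //.
  by rewrite [X in X == _]setUC.
Qed.

Lemma sum_pairs2U f X Y : [disjoint X & Y] ->
  \sum_(e in pairs2 (X :|: Y)) f e = \sum_(e in pairs2 X) f e +
    \sum_(e in pairs2 Y) f e + \sum_(u in X) \sum_(v in Y) f [set u; v].
Proof.
move=> dXY.
suff : 2 * \sum_(e in pairs2 (X :|: Y)) f e = 2 * (\sum_(e in pairs2 X) f e +
    \sum_(e in pairs2 Y) f e + \sum_(u in X) \sum_(v in Y) f [set u; v]) by lia.
have splitD (Z W : {set T}) u : u \notin W -> (Z :|: W) :\ u = (Z :\ u) :|: W.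
  by move=> uW; rewrite setDUl; congr (_ :|: _); apply/setDidPl;
    rewrite disjoint_sym disjoints1.
rewrite sum_pairs2_double sum_setU //.
rewrite (eq_bigr (fun u => \sum_(v in X :\ u) f [set u; v] +
                           \sum_(v in Y) f [set u; v])); last first.
  move=> u uX; rewrite splitD ?(disjointFr dXY) // sum_setU //.
  exact: disjointWl (subsetDl _ _) dXY.
rewrite [\sum_(u in Y) _](eq_bigr (fun u => \sum_(v in X) f [set v; u] +
                                           \sum_(v in Y :\ u) f [set u; v]));
  last first.
  move=> u uY; rewrite setUC splitD ?(disjointFl dXY) ?disjoint_sym //.
  rewrite sum_setU; last by rewrite disjoint_sym; apply: disjointWr (subsetDl _ _) dXY.
  by rewrite addnC; congr (_ + _); apply: eq_bigr => v _; rewrite setUC.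
rewrite !big_split /= !mulnDr !sum_pairs2_double.
rewrite [\sum_(i in Y) \sum_(v in X) _]exchange_big /=; lia.
Qed.

End SetSums.

Section WeightOfSets.
Variable T : finType.
Implicit Types (G : trigraph T) (X R S : {set T}) (w : weight T).

Definition wt_on X w S : nat :=
  \sum_(u in S) wv w u
  + \sum_(u in S) \sum_(v in X :\: S) wo w u v
  + \sum_(e in pairs2 (X :\: S)) wu w e.

Lemma wtE G w S : wt G w S = wt_on (tverts G) w S.
Proof. by []. Qed.

Definition ordered_le_unordered X w : Prop :=
  {in X &, forall u v, u != v -> wo w u v <= wu w [set u; v]}.

Lemma weight_function_le G w :
  is_weight_function G w -> ordered_le_unordered (tverts G) w.
Proof. by move=> wfG u v uG vG uv; case: (wfG u v uG vG uv). Qed.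

Lemma wt_on_setD1 X w S u : u \in S -> u \in X ->
  wt_on X w (S :\ u) + wv w u + \sum_(v in X :\: S) wo w u v =
  wt_on X w S + \sum_(v in S :\ u) wo w v u + \sum_(v in X :\: S) wu w [set u; v].
Proof.
move=> uS uX; rewrite /wt_on (big_setD1 u uS) /=.
rewrite [\sum_(a in S) \sum_(b in X :\: S) _](big_setD1 u uS) /=.
have -> : X :\: (S :\ u) = u |: (X :\: S).
  by apply/setP => x; rewrite !inE; case: (eqVneq x u) => [->|].
have uXS : u \notin X :\: S by rewrite !inE uS.
rewrite sum_pairs2U ?disjoints1 // pairs2_set1 big_set0 big_set1.
rewrite [\sum_(a in S :\ u) \sum_(v in _ |: _) _](eq_bigr (fun a =>
  wo w a u + \sum_(v in X :\: S) wo w a v)); last by move=> a _; rewrite big_setU1.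
rewrite big_split /=; lia.
Qed.

Lemma wt_on_le_setD1 X w S u : ordered_le_unordered X w ->
  S \subset X -> u \in S -> wv w u = 0 -> wt_on X w S <= wt_on X w (S :\ u).
Proof.
move=> hw SX uS wu0; have uX := subsetP SX u uS.
have := wt_on_setD1 w uS uX; rewrite wu0 addn0.
suff : \sum_(v in X :\: S) wo w u v <= \sum_(v in X :\: S) wu w [set u; v] by lia.
apply: leq_sum => v; rewrite inE => /andP [vS vX]; apply: hw => //.
by apply: contraNneq vS => <-.
Qed.

Lemma wt_on_le_subset X w S S' : ordered_le_unordered X w ->
  S' \subset S -> S \subset X -> {in S :\: S', forall u, wv w u = 0} ->
  wt_on X w S <= wt_on X w S'.
Proof.
move=> hw S'S + w0; move: {2}#|S :\: S'| (erefl #|S :\: S'|) => n.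
elim: n S S'S w0 => [|n IH] S S'S w0 cD SX.
  suff -> : S = S' by [].
  apply/eqP; rewrite eqEsubset S'S andbT -setD_eq0 -cards_eq0 cD //.
have [u uD] : exists u, u \in S :\: S' by apply/set0Pn; rewrite -card_gt0 cD.
have uS : u \in S by case/setDP: uD.
apply: leq_trans (wt_on_le_setD1 hw SX uS (w0 u uD)) _.
apply: IH.
- apply/subsetP => x xS'; rewrite !inE (subsetP S'S x xS') andbT.
  by apply/eqP => xu; case/setDP: uD; rewrite -xu xS'.
- by move=> x; rewrite !inE => /and3P [xS' _ xS]; apply: w0; rewrite inE xS' xS.
- by move: (cardsD1 u (S :\: S')); rewrite uD cD setDDl setUC -setDDl; case.
- exact: subset_trans (subsetDl _ _) SX.
Qed.

End WeightOfSets.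

Section Reduction.
Variable T : finType.
Implicit Types (G : trigraph T) (R S : {set T}) (w : weight T).

Definition red_loss G w R u : nat :=
  \sum_(v in tverts G :\: R) (wu w [set u; v] - wo w u v).

Lemma wt_red_ext G w R S : ordered_le_unordered (tverts G) w ->
  R \subset tverts G -> S \subset R ->
  wt_on R (red_weight G w R) S + ext G w R =
  wt_on (tverts G) w S + \sum_(u in S) (red_loss G w R u - wv w u).
Proof.
move=> hw RX SR; set X := tverts G.
have XS : X :\: S = (R :\: S) :|: (X :\: R).
  apply/setP => x; rewrite !inE; case xS: (x \in S); case xR: (x \in R) => //=.
    by rewrite (subsetP SR x xS) in xR.
  by rewrite (subsetP RX x xR).
have dRX : [disjoint R :\: S & X :\: R].
  by apply/disjointP => x; rewrite !inE => /andP [_ ->].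
have loss u : u \in S ->
    \sum_(v in X :\: R) wu w [set u; v] = red_loss G w R u + \sum_(v in X :\: R) wo w u v.
  move=> uS; rewrite /red_loss -/X -big_split /=; apply: eq_bigr => v.
  rewrite inE => /andP [vR vX]; rewrite subnK // hw //; first exact: subsetP RX u (subsetP SR u uS).
  by apply: contraNneq vR => <-; apply: subsetP SR u uS.
rewrite /wt_on /ext /red_weight /= -/X XS sum_pairs2U //.
rewrite [\sum_(u in R) _](big_setID S) (setIidPr SR).
under [\sum_(u in S) \sum_(v in _ :|: _) _]eq_bigr => u _ do rewrite sum_setU //.
rewrite big_split /=.
have vertex : \sum_(u in S) (wv w u - red_loss G w R u) +
    \sum_(u in S) \sum_(v in X :\: R) wu w [set u; v] =
  \sum_(u in S) wv w u + \sum_(u in S) \sum_(v in X :\: R) wo w u v +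
    \sum_(u in S) (red_loss G w R u - wv w u).
  rewrite -!big_split /=; apply: eq_bigr => u uS; rewrite loss //; lia.
move: vertex; rewrite /red_loss -/X; lia.
Qed.

Lemma wt_le_red_ext G w R S : ordered_le_unordered (tverts G) w ->
  R \subset tverts G -> S \subset R ->
  wt_on (tverts G) w S <= wt_on R (red_weight G w R) S + ext G w R.
Proof. by move=> hw RX SR; rewrite wt_red_ext // leq_addr. Qed.

(* Vertices whose weight is killed by the truncation in [red_weight] can be
   dropped, after which no truncation occurs. *)
Lemma red_ext_le_wt G w R S : ordered_le_unordered (tverts G) w ->
  R \subset tverts G -> S \subset R ->
  exists2 S' : {set T}, S' \subset S &
    wt_on R (red_weight G w R) S + ext G w R <= wt_on (tverts G) w S'.
Proof.
move=> hw RX SR; set S' := [set u in S | red_loss G w R u <= wv w u].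
have S'S : S' \subset S by apply/subsetP => u; rewrite inE => /andP [].
exists S' => //.
have hwR : ordered_le_unordered R (red_weight G w R).
  by move=> u v uR vR; apply: hw; apply: subsetP RX _ _.
have drop : wt_on R (red_weight G w R) S <= wt_on R (red_weight G w R) S'.
  apply: (wt_on_le_subset hwR) => // u; rewrite !inE /= => /andP [+ uS].
  by rewrite uS /= -ltnNge => /ltnW; rewrite -subn_eq0 => /eqP.
apply: leq_trans (leq_add drop (leqnn _)) _.
rewrite wt_red_ext //; last exact: subset_trans S'S SR.
by rewrite big1 ?addn0 // => u; rewrite inE => /andP [_]; rewrite -subn_eq0 => /eqP.
Qed.

End Reduction.

Section CrossPairs.
Variable T : finType.
Implicit Types (S U X Y Z : {set T}) (w : weight T).

(* The contribution of the pair {u, v} to the weight of S. *)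
Definition cross_wt w S u v : nat :=
  if u \in S then (if v \in S then 0 else wo w u v)
  else if v \in S then wo w v u else wu w [set u; v].

Definition cross_sum w S Y Z : nat := \sum_(u in Y) \sum_(v in Z) cross_wt w S u v.

Lemma cross_sumC w S Y Z : cross_sum w S Y Z = cross_sum w S Z Y.
Proof.
rewrite /cross_sum exchange_big /=; apply: eq_bigr => v _; apply: eq_bigr => u _.
by rewrite /cross_wt setUC; case: (u \in S); case: (v \in S).
Qed.

Lemma cross_sumE w S Y Z : cross_sum w S Y Z =
  \sum_(u in Y :&: S) \sum_(v in Z :\: S) wo w u v
  + \sum_(u in Z :&: S) \sum_(v in Y :\: S) wo w u v
  + \sum_(u in Y :\: S) \sum_(v in Z :\: S) wu w [set u; v].
Proof.
have inS u : u \in S -> \sum_(v in Z) cross_wt w S u v = \sum_(v in Z :\: S) wo w u v.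
  move=> uS; rewrite (big_setID S) /= big1 ?add0n => [|v /setIP [_ vS]].
    by apply: eq_bigr => v /setDP [_ /negbTE vS]; rewrite /cross_wt uS vS.
  by rewrite /cross_wt uS vS.
have outS u : u \notin S -> \sum_(v in Z) cross_wt w S u v =
    \sum_(v in Z :&: S) wo w v u + \sum_(v in Z :\: S) wu w [set u; v].
  move=> /negbTE uS; rewrite (big_setID S) /=.
  by congr (_ + _); apply: eq_bigr => v;
    [case/setIP => _ vS | case/setDP => _ /negbTE vS]; rewrite /cross_wt uS vS.
rewrite /cross_sum (big_setID S) /=.
rewrite [X in X + _](eq_bigr (fun u => \sum_(v in Z :\: S) wo w u v)); last first.
  by move=> u /setIP [_ /inS].
rewrite [X in _ + X](eq_bigr (fun u => \sum_(v in Z :&: S) wo w v u +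
                                      \sum_(v in Z :\: S) wu w [set u; v])); last first.
  by move=> u /setDP [_ /outS].
by rewrite big_split /= [\sum_(i in Y :\: S) \sum_(v in Z :&: S) _]exchange_big addnA.
Qed.

Lemma wt_on_setIU w S Y Z : [disjoint Y & Z] ->
  wt_on (Y :|: Z) w ((Y :|: Z) :&: S) =
  wt_on Y w (Y :&: S) + wt_on Z w (Z :&: S) + cross_sum w S Y Z.
Proof.
move=> dYZ.
have DI U : U :\: (U :&: S) = U :\: S.
  by apply/setP => x; rewrite !inE; case: (x \in U); rewrite ?andbF ?andbT.
have dI := disjointW (subsetIl Y S) (subsetIl Z S) dYZ.
have dD := disjointW (subsetDl Y S) (subsetDl Z S) dYZ.
have splitZ U : \sum_(u in U) \sum_(v in Y :\: S :|: Z :\: S) wo w u v =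
    \sum_(u in U) \sum_(v in Y :\: S) wo w u v + \sum_(u in U) \sum_(v in Z :\: S) wo w u v.
  by rewrite -big_split; apply: eq_bigr => u _; rewrite sum_setU.
rewrite /wt_on !DI setIUl setDUl !sum_setU // sum_pairs2U // !splitZ cross_sumE.
lia.
Qed.

Lemma eq_wt_on X w1 w2 S : S \subset X -> {in X, wv w1 =1 wv w2} ->
  {in X &, forall u v, u != v ->
     wo w1 u v = wo w2 u v /\ wu w1 [set u; v] = wu w2 [set u; v]} ->
  wt_on X w1 S = wt_on X w2 S.
Proof.
move=> SX eqv eqp; rewrite /wt_on.
have SXp u : u \in S -> u \in X by apply: subsetP.
congr (_ + _ + _).
- by apply: eq_bigr => u /SXp; apply: eqv.
- apply: eq_bigr => u uS; apply: eq_bigr => v /setDP [vX vS].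
  by case: (eqp u v (SXp u uS) vX) => //; apply: contraNneq vS => <-.
- apply: eq_bigr => e /pairs2P [u [v [/setDP [uX _] /setDP [vX _] uv ->]]].
  by case: (eqp u v uX vX uv).
Qed.

Lemma eq_cross_sum w1 w2 S Y Z :
  {in Y & Z, forall u v, [/\ wo w1 u v = wo w2 u v, wo w1 v u = wo w2 v u
                          & wu w1 [set u; v] = wu w2 [set u; v]]} ->
  cross_sum w1 S Y Z = cross_sum w2 S Y Z.
Proof.
move=> eqp; apply: eq_bigr => u uY; apply: eq_bigr => v vZ.
by case: (eqp u v uY vZ) => e1 e2 e3; rewrite /cross_wt e1 e2 e3.
Qed.

(* Moving vertices of Z into S turns their pairs with unchosen vertices of Y
   from w(uv) into the smaller w(v,u). *)
Lemma cross_sum_le w S1 S2 Y Z : Y :&: S1 = Y :&: S2 -> Z :&: S1 \subset Z :&: S2 ->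
  {in Y & Z, forall u v, wo w v u <= wu w [set u; v]} ->
  cross_sum w S2 Y Z <= cross_sum w S1 Y Z.
Proof.
move=> eqY subZ hw; apply: leq_sum => u uY; apply: leq_sum => v vZ; rewrite /cross_wt.
have -> : (u \in S2) = (u \in S1) by move/setP: eqY => /(_ u); rewrite !inE uY.
have vS12 : v \in S1 -> v \in S2.
  by move=> vS1; have := subsetP subZ v; rewrite !inE vZ vS1 => /(_ isT).
case: (u \in S1); case: (boolP (v \in S1)) => [/vS12 -> //|_];
  by case: (v \in S2) => //; apply: hw.
Qed.

Lemma wt_on_exchange_le w S1 S2 Y Z : [disjoint Y & Z] ->
  Y :&: S1 = Y :&: S2 -> Z :&: S1 \subset Z :&: S2 ->
  {in Y & Z, forall u v, wo w v u <= wu w [set u; v]} ->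
  wt_on (Y :|: Z) w ((Y :|: Z) :&: S2) + wt_on Z w (Z :&: S1) <=
  wt_on (Y :|: Z) w ((Y :|: Z) :&: S1) + wt_on Z w (Z :&: S2).
Proof.
move=> dYZ eqY subZ hw; rewrite !wt_on_setIU // eqY.
have := cross_sum_le eqY subZ hw; lia.
Qed.

End CrossPairs.

Section CutDecomposition.
Variable T : finType.
Implicit Types (A B C S : {set T}) (w : weight T).

Lemma wt_on_cut w wB A B C S :
  [disjoint A & B] -> [disjoint A & C] -> [disjoint B & C] ->
  S \subset A :|: B :|: C ->
  {in A & B, forall a b, [/\ wo w a b = 0, wo w b a = 0 & wu w [set a; b] = 0]} ->
  {in B, wv wB =1 wv w} ->
  {in B :|: C &, forall u v, u != v -> ~~ ((u \in C) && (v \in C)) ->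
     [/\ wo wB u v = wo w u v, wo wB v u = wo w v u
       & wu wB [set u; v] = wu w [set u; v]]} ->
  wt_on (A :|: B :|: C) w S + wt_on C wB (C :&: S) =
  wt_on (A :|: C) w ((A :|: C) :&: S) + wt_on (B :|: C) wB ((B :|: C) :&: S).
Proof.
move=> dAB dAC dBC SV zAB eqv eqB.
have dACB : [disjoint A :|: C & B].
  by apply/disjointP => x /setUP [xA|xC];
    [rewrite (disjointFr dAB xA) | rewrite (disjointFl dBC xC)].
have notC u : u \in B -> u \notin C by move=> uB; rewrite (disjointFr dBC uB).
have inBC u : u \in B -> u \in B :|: C by move=> uB; rewrite inE uB.
have crossAB : cross_sum w S A B = 0.
  apply: big1 => a aA; apply: big1 => b bB.
  by case: (zAB a b aA bB) => e1 e2 e3; rewrite /cross_wt e1 e2 e3; do 2!case: ifP.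
have crossBC : cross_sum wB S B C = cross_sum w S C B.
  rewrite [RHS]cross_sumC; apply: eq_cross_sum => u v uB vC.
  apply: eqB; [exact: inBC | by rewrite inE vC orbT | | by rewrite (negbTE (notC u uB))].
  by apply: contraTneq vC => <-; apply: notC.
have wtB : wt_on B wB (B :&: S) = wt_on B w (B :&: S).
  apply: eq_wt_on => [|//|u v uB vB uv]; first exact: subsetIl.
  by case: (eqB u v (inBC u uB) (inBC v vB) uv); rewrite ?(negbTE (notC u uB)).
rewrite -{1}(setIidPr SV) setUAC (wt_on_setIU w S dACB) (wt_on_setIU wB S dBC).
rewrite wtB crossBC.
rewrite /cross_sum sum_setU //= -/(cross_sum w S A B) -/(cross_sum w S C B) crossAB.
lia.
Qed.

End CutDecomposition.

Section Stability.
Variable T : finType.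
Implicit Types (G H : trigraph T) (R S X Y : {set T}) (w : weight T).

Lemma stableP G S :
  reflect (S \subset tverts G /\
           {in S &, forall u v, u != v -> (tadj G [set u; v] <= 0)%R})
          (stable G S).
Proof.
apply: (iffP andP) => -[SG h]; split => //.
  by move=> u v uS vS; move/forall_inP/(_ u uS)/forall_inP/(_ v vS)/implyP: h.
by apply/forall_inP => u uS; apply/forall_inP => v vS; apply/implyP; apply: h.
Qed.

Lemma stable_subset G S S' : S' \subset S -> stable G S -> stable G S'.
Proof.
move=> S'S /stableP [SG h]; apply/stableP; split; first exact: subset_trans S'S SG.
by move=> u v uS' vS'; apply: h; apply: subsetP S'S _ _.
Qed.

Lemma stableU G X Y : stable G X -> stable G Y ->
  {in X & Y, forall u v, u != v -> (tadj G [set u; v] <= 0)%R} ->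
  stable G (X :|: Y).
Proof.
move=> /stableP [XG hX] /stableP [YG hY] hXY; apply/stableP.
split=> [|u v /setUP [uX|uY] /setUP [vX|vY]]; first by rewrite subUset XG.
- exact: hX.
- exact: hXY.
- by rewrite eq_sym setUC; apply: hXY.
- exact: hY.
Qed.

Lemma stable_induced H R S : S \subset R -> R \subset tverts H ->
  stable (induced H R) S = stable H S.
Proof. by move=> SR RH; rewrite /stable /= SR (subset_trans SR RH). Qed.

Lemma stable_relaxation G X H S : relaxation G X H -> X \subset tverts G ->
  S \subset X -> stable H S = stable G S.
Proof.
case=> HX hrel XG SX; apply/stableP/stableP => -[_ h]; split;
  rewrite ?HX ?(subset_trans SX XG) // => u v uS vS uv;
  have := h u v uS vS uv;
  by case: (hrel _ (mem_pairs2 (subsetP SX u uS) (subsetP SX v vS) uv)) => [->|[-> ->]].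
Qed.

Lemma wt_le_alpha G w S : stable G S -> wt G w S <= alpha G w.
Proof. exact: leq_bigmax_cond. Qed.

Lemma alpha_witness G w : exists2 S, stable G S & alpha G w = wt G w S.
Proof.
have st0 : stable G set0 by apply/stableP; split=> [|u v]; rewrite ?sub0set ?inE.
rewrite /alpha (bigmax_eq_arg set0 st0).
by case: arg_maxnP => // S stS _; exists S.
Qed.

End Stability.

Section Proposition.
Variables (T : finType) (G : trigraph T) (w : weight T) (A B C : {set T}).
Variables (GA GB : trigraph T) (k : nat) (wB : weight T).
Hypotheses (wfG : is_weight_function G w) (cut : cut_partition G A B C).
Hypotheses (relA : relaxation G (A :|: C) GA) (relB : relaxation G (B :|: C) GB).
Hypotheses (wfGB : is_weight_function GB wB) (eqv : forall u, u \in B -> wv wB u = wv w u).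
Hypothesis eqB : forall u v, u \in B :|: C -> v \in B :|: C -> u != v ->
  ~~ ((u \in C) && (v \in C)) ->
  [/\ wo wB u v = wo w u v, wo wB v u = wo w v u & wu wB [set u; v] = wu w [set u; v]].
Hypothesis hk : forall SC : {set T}, SC \subset C -> stable GB SC ->
  wt (induced GB C) wB SC + k = alphaAC GA w A SC.
Implicit Types S : {set T}.

Let V := tverts G.
Let VE : V = A :|: B :|: C. Proof. by case: cut => -[]. Qed.
Let dAB : [disjoint A & B]. Proof. by case: cut => -[]. Qed.
Let dAC : [disjoint A & C]. Proof. by case: cut => -[]. Qed.
Let dBC : [disjoint B & C]. Proof. by case: cut => -[]. Qed.
Let cutAB a b : a \in A -> b \in B -> tadj G [set a; b] = (-1)%R.
Proof. by case: cut => _ [_ _]; apply. Qed.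
Let dACB : [disjoint A :|: C & B].
Proof.
by apply/disjointP => x /setUP [xA|xC];
  [rewrite (disjointFr dAB xA) | rewrite (disjointFl dBC xC)].
Qed.
Let GAE : tverts GA = A :|: C. Proof. by case: relA. Qed.
Let GBE : tverts GB = B :|: C. Proof. by case: relB. Qed.
Let ACV : A :|: C \subset V. Proof. by rewrite VE setUAC subsetUl. Qed.
Let BCV : B :|: C \subset V. Proof. by rewrite VE -setUA subsetUr. Qed.

Let stable_GA S : S \subset A :|: C -> stable GA S = stable G S.
Proof. exact: stable_relaxation relA ACV. Qed.
Let stable_GB S : S \subset B :|: C -> stable GB S = stable G S.
Proof. exact: stable_relaxation relB BCV. Qed.

Let hwA : ordered_le_unordered (tverts GA) w.
Proof.
by move=> u v; rewrite GAE => uA vA; apply: (weight_function_le wfG); apply: (subsetP ACV).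
Qed.

Let wt_cut S : S \subset V ->
  wt_on V w S + wt_on C wB (C :&: S) =
  wt_on (A :|: C) w ((A :|: C) :&: S) + wt_on (B :|: C) wB ((B :|: C) :&: S).
Proof.
rewrite VE => SV; apply: wt_on_cut => // a b aA bB.
have [aV bV] : a \in V /\ b \in V.
  by rewrite VE !inE aA bB ?orbT.
have ab : a != b by apply: contraTneq bB => <-; rewrite (disjointFr dAB aA).
by case: (wfG aV bV ab) => + _; apply; rewrite cutAB.
Qed.

Lemma wt_le_alphaAC S : S \subset A :|: C -> stable G S ->
  wt_on (A :|: C) w S <= alphaAC GA w A (C :&: S).
Proof.
move=> SAC stS; set R := A :|: C :&: S.
have RA : R \subset tverts GA by rewrite GAE setUS ?subsetIl.
have SR : S \subset R.
  apply/subsetP => x xS; move: (subsetP SAC x xS); rewrite !inE xS andbT.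
  by case/orP => ->; rewrite ?orbT.
rewrite -GAE; apply: leq_trans (wt_le_red_ext hwA RA SR) _.
rewrite leq_add2r; apply: wt_le_alpha.
by rewrite stable_induced // stable_GA // -GAE (subset_trans SR).
Qed.

Lemma alpha_le : alpha G w <= k + alpha GB wB.
Proof.
apply/bigmax_leqP => S stS; have SV : S \subset V by case/stableP: stS.
have stBC : stable GB ((B :|: C) :&: S).
  by rewrite stable_GB ?subsetIl // (stable_subset (subsetIr _ _) stS).
have stC : stable GB (C :&: S).
  by apply: stable_subset stBC; rewrite setSI ?subsetUr.
have leA := wt_le_alphaAC (subsetIl _ _) (stable_subset (subsetIr _ _) stS).
rewrite setIA (setIidPl (subsetUr A C)) in leA.
have eqC : wt_on C wB (C :&: S) + k = _ := hk (subsetIl C S) stC.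
have leB := wt_le_alpha wB stBC; rewrite wtE GBE in leB.
have := wt_cut SV; rewrite wtE -/V => eqV.
clear -leA eqC leB eqV; lia.
Qed.

Lemma stable_glue (S' T' : {set T}) : stable GB S' -> T' \subset A :|: C :&: S' ->
  stable G T' -> stable G (T' :|: B :&: S').
Proof.
move=> stS' T'R stT'.
have stS'G : stable G S'.
  by rewrite -stable_GB //; case/stableP: stS'; rewrite GBE.
apply: stableU => //; first exact: stable_subset (subsetIr _ _) stS'G.
move=> u v uT' /setIP [vB vS'] uv.
case/setUP: (subsetP T'R u uT') => [uA | /setIP [_ uS']]; first by rewrite cutAB.
by case/stableP: stS'G => _; apply.
Qed.

Let hwB : {in B & C, forall u v, wo wB v u <= wu wB [set u; v]}.
Proof.
move=> u v uB vC; rewrite setUC.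
have vu : v != u by apply: contraTneq uB => <-; rewrite (disjointFl dBC vC).
have uG : u \in tverts GB by rewrite GBE inE uB.
have vG : v \in tverts GB by rewrite GBE inE vC orbT.
by case: (wfGB vG uG vu).
Qed.

Lemma wt_glue_ge (S' T' : {set T}) : S' \subset B :|: C -> T' \subset A :|: C :&: S' ->
  wt_on C wB (C :&: S') + k <= wt_on (A :|: C) w T' ->
  k + wt_on (B :|: C) wB S' <= wt_on V w (T' :|: B :&: S').
Proof.
move=> S'BC T'R leC; set S := T' :|: B :&: S'.
have T'AC : T' \subset A :|: C by apply: subset_trans T'R _; rewrite setUS ?subsetIl.
have SV : S \subset V.
  by rewrite subUset (subset_trans T'AC ACV) (subset_trans (subsetIr B S') _)
    ?(subset_trans S'BC BCV).
have ACS : (A :|: C) :&: S = T'.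
  by rewrite setIUr (setIidPr T'AC) setIA (disjoint_setI0 dACB) set0I setU0.
have BS : B :&: S = B :&: S'.
  rewrite setIUr [B :&: T']setIC (disjoint_setI0 (disjointWl T'AC dACB)).
  by rewrite set0U setIA setIid.
have CS : C :&: S \subset C :&: S'.
  apply/subsetP => x /setIP [xC /setUP [xT' | /setIP [xB _]]].
    case/setUP: (subsetP T'R x xT') => [xA | //].
    by rewrite (disjointFr dAC xA) in xC.
  by rewrite (disjointFr dBC xB) in xC.
have exch := wt_on_exchange_le dBC BS CS hwB; rewrite (setIidPr S'BC) in exch.
have := wt_cut SV; rewrite ACS => eqV.
clear -leC exch eqV; lia.
Qed.

Lemma alpha_ge : k + alpha GB wB <= alpha G w.
Proof.
have [S' stS' ->] := alpha_witness GB wB.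
have S'BC : S' \subset B :|: C by case/stableP: stS'; rewrite GBE.
set R := A :|: C :&: S'.
have RA : R \subset tverts GA by rewrite GAE setUS ?subsetIl.
have [T0 stT0 eqT0] := alpha_witness (red_graph GA R) (red_weight GA w R).
have T0R : T0 \subset R by case/stableP: stT0.
have [T' T'T0 leT'] := red_ext_le_wt hwA RA T0R.
have T'R := subset_trans T'T0 T0R.
have stT' : stable G T'.
  rewrite -stable_GA; last by apply: subset_trans T'R _; rewrite setUS ?subsetIl.
  by apply: stable_subset T'T0 _; rewrite -(stable_induced T0R RA).
apply: leq_trans (wt_le_alpha w (stable_glue stS' T'R stT')).
rewrite !wtE GBE; apply: wt_glue_ge => //.
rewrite (hk (subsetIl C S') (stable_subset (subsetIr _ _) stS')) /alphaAC -/R eqT0.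
by rewrite -GAE.
Qed.

End Proposition.

Theorem proposition3p9 (T : finType) (G : trigraph T) (w : weight T)
    (A B C : {set T}) (GA GB : trigraph T) (k : nat) (wB : weight T) :
  is_trigraph G ->
  is_weight_function G w ->
  cut_partition G A B C ->
  relaxation G (A :|: C) GA ->
  relaxation G (B :|: C) GB ->
  is_weight_function GB wB ->
  (forall u, u \in B -> wv wB u = wv w u) ->
  (forall u v, u \in B :|: C -> v \in B :|: C -> u != v ->
     ~~ ((u \in C) && (v \in C)) ->
     [/\ wo wB u v = wo w u v, wo wB v u = wo w v u
       & wu wB [set u; v] = wu w [set u; v]]) ->
  (forall SC : {set T}, SC \subset C -> stable GB SC ->
     wt (induced GB C) wB SC + k = alphaAC GA w A SC) ->
  alpha G w = k + alpha GB wB.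
Proof.
move=> _ wfG cut relA relB wfGB eqv eqB hk.
apply/eqP; rewrite eqn_leq (alpha_le wfG cut relA relB eqv eqB hk).
exact: alpha_ge wfG cut relA relB wfGB eqv eqB hk.
Qed.
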